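(* Let $\eta_3=\int_1^\infty\frac{\mathrm{d}t}{\sqrt{t^6-1}}$ and let $\mathrm{cleafh}_3:(-\eta_3,\eta_3)\to\mathbb{R}$ be the hyperbolic leaf function of basis $3$. For every real $l$ with $2l\in(-\eta_3,\eta_3)$, writing $C=\mathrm{cleafh}_3(l)$, $$\mathrm{cleafh}_3(2l)=\frac{2C^2+2C^4-1}{\sqrt{1+8C^2+8C^6-8C^8}}.$$
   Context: For a natural number $n$, let $\eta_n=\int_1^\infty\frac{\mathrm{d}t}{\sqrt{t^{2n}-1}}$. The hyperbolic leaf function $\mathrm{cleafh}_n$ is the solution $r(l)$ on $(-\eta_n,\eta_n)$ of $\frac{\mathrm{d}^2r}{\mathrm{d}l^2}=n\,r^{2n-1}$ with $r(0)=1$, $r'(0)=0$; it is even, and for $l\ge0$ it is the inverse of $r\mapsto\int_1^r\frac{\mathrm{d}t}{\sqrt{t^{2n}-1}}$, $r\ge1$. *)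

From Stdlib Require Import Reals.
From Coquelicot Require Import Coquelicot.
Open Scope R_scope.

Definition eta (n : nat) : R :=
  RInt_gen (fun t => / sqrt (t ^ (2 * n) - 1)) (at_right 1) (Rbar_locally p_infty).

Definition is_cleafh (n : nat) (r : R -> R) : Prop :=
  r 0 = 1 /\ Derive r 0 = 0 /\
  (forall l, - eta n < l < eta n ->
     ex_derive r l /\ is_derive (Derive r) l (INR n * r l ^ (2 * n - 1))).

From Stdlib Require Import Reals Lra Lia.
From Coquelicot Require Import Coquelicot.
Open Scope R_scope.

(* Put v = 1 / cleafh_3^2.  The first integral r'^2 = r^6 - 1 of r'' = 3 r^5 turns into
   v'' = -6 v^2 and v'^2 = 4 - 4 v^3, so -v is a translate, by a half-period, of the
   Weierstrass function with invariants g2 = 0, g3 = -4; conjugating its duplication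
   formula by that translation yields the rational map [doubling].  Then t |-> v (2 t) and
   t |-> doubling (v t) both solve w'' = -24 w^2 with w(0) = 1, w'(0) = 0, and both are
   bounded, so a Gronwall estimate on their squared phase-space distance shows they agree.
   Solving 1 / cleafh_3(2l)^2 = doubling (1 / C^2) for the positive number cleafh_3(2l)
   gives the formula. *)

Lemma is_derive_val (f : R -> R) (x l l' : R) :
  is_derive f x l -> l = l' -> is_derive f x l'.
Proof. now intros H <-. Qed.

Lemma is_derive_Rmult (f g : R -> R) (x df dg : R) :
  is_derive f x df -> is_derive g x dg ->
  is_derive (fun t => f t * g t) x (df * g x + f x * dg).
Proof. intros Hf Hg. apply (is_derive_mult f g); [exact Hf | exact Hg | apply Rmult_comm]. Qed.

Lemma is_derive_Rcomp (f g : R -> R) (x df dg : R) :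
  is_derive f (g x) df -> is_derive g x dg -> is_derive (fun t => f (g t)) x (dg * df).
Proof. intros Hf Hg. exact (is_derive_comp f g x df dg Hf Hg). Qed.

Lemma le_of_derive_nonpos (f df : R -> R) (a b : R) : a <= b ->
  (forall x, a <= x <= b -> is_derive f x (df x)) ->
  (forall x, a <= x <= b -> df x <= 0) -> f b <= f a.
Proof.
  intros Hab Hd Hneg. destruct (Req_dec a b) as [->|Hne]; [lra|].
  destruct (MVT_cor2 f df a b) as [c [Hfc Hc]]; [lra| |].
  - intros c Hc. apply is_derive_Reals, Hd, Hc.
  - assert (df c <= 0) by (apply Hneg; lra). nra.
Qed.

Lemma is_derive_0_eq (f : R -> R) (a b c d : R) :
  (forall x, a < x < b -> is_derive f x 0) -> a < c < b -> a < d < b -> f c = f d.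
Proof.
  intros Hf Hc Hd.
  destruct (Rtotal_order c d) as [Hcd|[<-|Hcd]]; [| reflexivity | symmetry];
    apply eq_is_derive; try (intros x Hx; apply Hf); lra.
Qed.

Lemma pos_of_continuous_nonzero (f : R -> R) (a b x0 t : R) :
  (forall x, a < x < b -> continuity_pt f x) -> (forall x, a < x < b -> f x <> 0) ->
  a < x0 < b -> 0 < f x0 -> a < t < b -> 0 < f t.
Proof.
  intros Hcont Hnz Hx0 Hpos Ht.
  destruct (Rlt_or_le 0 (f t)) as [Hft|Hft]; [exact Hft | exfalso].
  assert (Hneg : f t < 0) by (destruct Hft; [easy | now exfalso; apply (Hnz t)]).
  destruct (Rlt_or_le x0 t) as [Hlt|Hle].
  - destruct (Ranalysis5.IVT_interv (fun x => - f x) x0 t) as [z [Hz Hfz]]; try lra.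
    + intros x Hx. apply continuity_pt_opp, Hcont. lra.
    + apply (Hnz z); lra.
  - assert (Hne : t <> x0) by (intros ->; lra).
    destruct (Ranalysis5.IVT_interv f t x0) as [z [Hz Hfz]]; try lra.
    + intros x Hx. apply Hcont. lra.
    + apply (Hnz z); lra.
Qed.

(* [m s * exp (- K s)] is nonincreasing. *)
Lemma gronwall (m dm : R -> R) (K t : R) : 0 <= t ->
  (forall s, 0 <= s <= t -> is_derive m s (dm s)) ->
  (forall s, 0 <= s <= t -> dm s <= K * m s) ->
  m t <= m 0 * exp (K * t).
Proof.
  intros Ht Hd Hle.
  set (phi := fun s => m s * exp (- K * s)).
  assert (Hphi : phi t <= phi 0).
  { apply (le_of_derive_nonpos phi (fun s => (dm s - K * m s) * exp (- K * s))); [exact Ht | |].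
    - intros s Hs. unfold phi. eapply is_derive_val.
      + apply is_derive_Rmult; [apply Hd, Hs|].
        apply (is_derive_Rcomp exp (fun s => - K * s)); [apply is_derive_exp|].
        auto_derive; [exact I | reflexivity].
      + cbv beta. ring.
    - intros s Hs. assert (H := Hle s Hs). assert (0 < exp (- K * s)) by apply exp_pos. nra. }
  unfold phi in Hphi. rewrite Rmult_0_r, exp_0, Rmult_1_r in Hphi.
  replace (m t) with (m t * exp (- K * t) * exp (K * t))
    by (rewrite Rmult_assoc, <- exp_plus; replace (- K * t + K * t) with 0 by ring;
        rewrite exp_0; ring).
  apply Rmult_le_compat_r; [apply Rlt_le, exp_pos | exact Hphi].
Qed.

Lemma gronwall_zero (m dm : R -> R) (K a b : R) : a < 0 < b ->
  (forall s, a < s < b -> is_derive m s (dm s) /\ Rabs (dm s) <= K * m s) ->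
  (forall s, a < s < b -> 0 <= m s) -> m 0 = 0 ->
  forall t, a < t < b -> m t = 0.
Proof.
  intros Hab Hd Hpos H0 t Ht.
  apply Rle_antisym; [|now apply Hpos].
  destruct (Rle_or_lt 0 t) as [Htp|Htn].
  - eapply Rle_trans; [apply (gronwall m dm K t Htp)|].
    + intros s Hs. apply Hd. lra.
    + intros s Hs. destruct (Hd s ltac:(lra)) as [_ Hb]. apply Rabs_le_between in Hb. lra.
    + rewrite H0. lra.
  - replace t with (- - t) by ring.
    eapply Rle_trans; [apply (gronwall (fun s => m (- s)) (fun s => - dm (- s)) K (- t))|].
    + lra.
    + intros s Hs. eapply is_derive_val.
      * apply (is_derive_Rcomp m Ropp); [apply Hd; lra | auto_derive; reflexivity].
      * ring.
    + intros s Hs. destruct (Hd (- s) ltac:(lra)) as [_ Hb]. apply Rabs_le_between in Hb. lra.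
    + rewrite Ropp_0, H0. lra.
Qed.

Definition solves_quadratic_ode (c a b : R) (y z : R -> R) : Prop :=
  forall t, a < t < b -> is_derive y t (z t) /\ is_derive z t (c * y t ^ 2).

Lemma solves_quadratic_ode_sub (c a b a' b' : R) (y z : R -> R) :
  a <= a' -> b' <= b -> solves_quadratic_ode c a b y z -> solves_quadratic_ode c a' b' y z.
Proof. intros Ha Hb H t Ht. apply H. lra. Qed.

Lemma solves_quadratic_ode_dilate (c a b k : R) (y z : R -> R) : 0 < k ->
  solves_quadratic_ode c (k * a) (k * b) y z ->
  solves_quadratic_ode (k ^ 2 * c) a b (fun t => y (k * t)) (fun t => k * z (k * t)).
Proof.
  intros Hk H t Ht.
  assert (Hkt : k * a < k * t < k * b) by (split; apply Rmult_lt_compat_l; lra).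
  destruct (H _ Hkt) as [Hy Hz]. split.
  - eapply is_derive_val.
    + apply (is_derive_Rcomp y (fun s => k * s)); [exact Hy | auto_derive; reflexivity].
    + ring.
  - eapply is_derive_val.
    + apply (is_derive_scal (fun s => z (k * s)) t k).
      apply (is_derive_Rcomp z (fun s => k * s)); [exact Hz | auto_derive; reflexivity].
    + simpl. unfold scal; simpl. unfold mult; simpl. ring.
Qed.

Lemma abs_two_mul_le (d e w K : R) :
  Rabs w <= K -> Rabs (2 * d * e * w) <= K * (d ^ 2 + e ^ 2).
Proof.
  intros Hw. apply Rabs_le_between in Hw. apply Rabs_le_between.
  assert (0 <= (K - w) * (d + e) ^ 2) by (apply Rmult_le_pos; [lra | apply pow2_ge_0]).
  assert (0 <= (K + w) * (d - e) ^ 2) by (apply Rmult_le_pos; [lra | apply pow2_ge_0]).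
  assert (0 <= (K - w) * (d - e) ^ 2) by (apply Rmult_le_pos; [lra | apply pow2_ge_0]).
  assert (0 <= (K + w) * (d + e) ^ 2) by (apply Rmult_le_pos; [lra | apply pow2_ge_0]).
  split; nra.
Qed.

Lemma quadratic_ode_unique (c B a b : R) (y1 z1 y2 z2 : R -> R) : a < 0 < b ->
  solves_quadratic_ode c a b y1 z1 -> solves_quadratic_ode c a b y2 z2 ->
  (forall t, a < t < b -> Rabs (y1 t) <= B /\ Rabs (y2 t) <= B) ->
  y1 0 = y2 0 -> z1 0 = z2 0 -> forall t, a < t < b -> y1 t = y2 t.
Proof.
  intros Hab H1 H2 HB Hy0 Hz0 t Ht.
  set (m := fun s => (y1 s - y2 s) ^ 2 + (z1 s - z2 s) ^ 2).
  assert (Hm : m t = 0).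
  { apply (gronwall_zero m
      (fun s => 2 * (y1 s - y2 s) * (z1 s - z2 s) * (1 + c * (y1 s + y2 s)))
      (1 + 2 * Rabs c * B) a b); [exact Hab | | | | exact Ht].
    - intros s Hs. destruct (H1 s Hs) as [Dy1 Dz1], (H2 s Hs) as [Dy2 Dz2]. split.
      + unfold m. eapply is_derive_val.
        * apply (is_derive_plus (fun s => (y1 s - y2 s) ^ 2) (fun s => (z1 s - z2 s) ^ 2));
            [apply (is_derive_pow (fun s => y1 s - y2 s)); exact (is_derive_minus y1 y2 s _ _ Dy1 Dy2)
            |apply (is_derive_pow (fun s => z1 s - z2 s)); exact (is_derive_minus z1 z2 s _ _ Dz1 Dz2)].
        * simpl. unfold minus, plus, opp; simpl. ring.
      + unfold m. apply abs_two_mul_le. destruct (HB s Hs) as [B1 B2].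
        eapply Rle_trans; [apply Rabs_triang|]. rewrite Rabs_R1, Rabs_mult.
        assert (Rabs (y1 s + y2 s) <= 2 * B) by (eapply Rle_trans; [apply Rabs_triang | lra]).
        assert (0 <= Rabs c) by apply Rabs_pos. nra.
    - intros s _. unfold m.
      apply Rplus_le_le_0_compat; apply pow2_ge_0.
    - unfold m. rewrite Hy0, Hz0. ring. }
  unfold m in Hm.
  assert (H := pow2_ge_0 (y1 t - y2 t)). assert (H' := pow2_ge_0 (z1 t - z2 t)). nra.
Qed.

Definition doubling (V : R) : R := (V ^ 4 + 8 * V ^ 3 + 8 * V - 8) / (V ^ 2 - 2 * V - 2) ^ 2.
Definition doubling' (V : R) : R :=
  -12 * (V ^ 4 + 2 * V ^ 3 + 6 * V ^ 2 - 4 * V + 4) / (V ^ 2 - 2 * V - 2) ^ 3.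
Definition doubling'' (V : R) : R :=
  24 * (V ^ 5 + 4 * V ^ 4 + 16 * V ^ 3 - 10 * V ^ 2 + 32 * V - 16) / (V ^ 2 - 2 * V - 2) ^ 4.

(* [auto_derive] and [field] leave the denominator expanded into factors
   [V * (V * 1) + - (2 * V) + - (2)]. *)
Ltac denominator_nonzero Hq :=
  repeat split; repeat apply Rmult_integral_contrapositive_currified;
  try apply R1_neq_R0; contradict Hq; rewrite <- Hq; ring.

Lemma is_derive_doubling (V : R) : V ^ 2 - 2 * V - 2 <> 0 -> is_derive doubling V (doubling' V).
Proof.
  intros Hq. unfold doubling, doubling'.
  auto_derive; [|field]; denominator_nonzero Hq.
Qed.

Lemma is_derive_doubling' (V : R) : V ^ 2 - 2 * V - 2 <> 0 -> is_derive doubling' V (doubling'' V).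
Proof.
  intros Hq. unfold doubling', doubling''.
  auto_derive; [|field]; denominator_nonzero Hq.
Qed.

(* The chain rule turns this into (doubling o v)'' = -24 (doubling o v)^2
   whenever v'' = -6 v^2 and v'^2 = 4 - 4 v^3. *)
Lemma doubling_ode (V : R) : V ^ 2 - 2 * V - 2 <> 0 ->
  doubling'' V * (4 - 4 * V ^ 3) - 6 * V ^ 2 * doubling' V = -24 * doubling V ^ 2.
Proof. intros Hq. unfold doubling, doubling', doubling''. field. exact Hq. Qed.

Lemma doubling_solves (a b : R) (v v' : R -> R) :
  solves_quadratic_ode (-6) a b v v' ->
  (forall t, a < t < b -> v' t ^ 2 = 4 - 4 * v t ^ 3) ->
  (forall t, a < t < b -> v t ^ 2 - 2 * v t - 2 <> 0) ->
  solves_quadratic_ode (-24) a b (fun t => doubling (v t)) (fun t => doubling' (v t) * v' t).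
Proof.
  intros Hv Henergy Hq t Ht. destruct (Hv t Ht) as [Dv Dv']. split.
  - eapply is_derive_val.
    + apply (is_derive_Rcomp doubling v); [apply is_derive_doubling, Hq, Ht | exact Dv].
    + ring.
  - eapply is_derive_val.
    + apply (is_derive_Rmult (fun t => doubling' (v t)) v'); [|exact Dv'].
      apply (is_derive_Rcomp doubling' v); [apply is_derive_doubling', Hq, Ht | exact Dv].
    + rewrite <- doubling_ode by (apply Hq, Ht). rewrite <- Henergy by exact Ht. ring.
Qed.

Lemma doubling_one : doubling 1 = 1.
Proof. unfold doubling. field. Qed.

Lemma doubling_denominator_neg (V : R) : 0 < V <= 1 -> V ^ 2 - 2 * V - 2 < 0.
Proof. intros HV. nra. Qed.

Lemma doubling_abs_le (V : R) : 0 < V <= 1 -> Rabs (doubling V) <= 3.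
Proof.
  intros HV. assert (Hq := doubling_denominator_neg V HV).
  assert (Hq2 : 4 <= (V ^ 2 - 2 * V - 2) ^ 2) by nra.
  assert (Hnum : Rabs (V ^ 4 + 8 * V ^ 3 + 8 * V - 8) <= 9).
  { assert (HV3 : 0 < V ^ 3 <= 1)
      by (split; [apply pow_lt | rewrite <- (pow1 3); apply pow_incr]; lra).
    assert (HV4 : 0 < V ^ 4 <= 1)
      by (split; [apply pow_lt | rewrite <- (pow1 4); apply pow_incr]; lra).
    apply Rabs_le_between. lra. }
  unfold doubling, Rdiv. rewrite Rabs_mult, Rabs_inv, (Rabs_right ((_ - _ - _) ^ 2)) by nra.
  apply Rmult_le_reg_r with ((V ^ 2 - 2 * V - 2) ^ 2); [lra|].
  rewrite Rmult_assoc, Rinv_l by lra. nra.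
Qed.

Lemma doubling_inv_sq (c : R) : c <> 0 -> 2 * c ^ 2 + 2 * c ^ 4 - 1 <> 0 ->
  doubling (/ c ^ 2) = (1 + 8 * c ^ 2 + 8 * c ^ 6 - 8 * c ^ 8) / (2 * c ^ 2 + 2 * c ^ 4 - 1) ^ 2.
Proof.
  intros Hc HN. unfold doubling. field.
  repeat split; try assumption. contradict HN. nra.
Qed.

Lemma eq_div_sqrt_of_inv_sq (X N P : R) : 0 < X -> 0 < N -> / X ^ 2 = P / N ^ 2 -> X = N / sqrt P.
Proof.
  intros HX HN H.
  assert (HP : P = (N / X) ^ 2).
  { replace P with (N ^ 2 * (P / N ^ 2)) by (field; lra). rewrite <- H. field. lra. }
  rewrite HP, sqrt_pow2; [field; lra | apply Rlt_le, Rdiv_lt_0_compat; lra].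
Qed.

Section Cleafh.

Variables (n : nat) (r : R -> R).
Hypothesis Hr : is_cleafh n r.

Lemma cleafh_is_derive (l : R) : - eta n < l < eta n -> is_derive r l (Derive r l).
Proof. intros Hl. apply Derive_correct, Hr, Hl. Qed.

Lemma cleafh_is_derive2 (l : R) : - eta n < l < eta n ->
  is_derive (Derive r) l (INR n * r l ^ (2 * n - 1)).
Proof. intros Hl. apply Hr, Hl. Qed.

Lemma cleafh_energy (l : R) : - eta n < l < eta n -> Derive r l ^ 2 = r l ^ (2 * n) - 1.
Proof.
  intros Hl. destruct Hr as [Hr0 [Hr'0 Hr'']].
  set (E := fun s => Derive r s ^ 2 - r s ^ (2 * n)).
  assert (HE : E l = E 0).
  { apply (is_derive_0_eq E (- eta n) (eta n)); [| exact Hl | lra].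
    intros s Hs. destruct (Hr'' s Hs) as [Dr DDr]. eapply is_derive_val.
    - apply (is_derive_minus (fun s => Derive r s ^ 2) (fun s => r s ^ (2 * n)));
        apply is_derive_pow; [exact DDr | apply Derive_correct, Dr].
    - rewrite mult_INR, Nat.sub_1_r. simpl. unfold minus, plus, opp; simpl. ring. }
  unfold E in HE. rewrite Hr0, Hr'0, pow1, pow_i in HE by lia. lra.
Qed.

Hypothesis Hn : (0 < n)%nat.

Lemma cleafh_sq_ge_1 (l : R) : - eta n < l < eta n -> 1 <= r l ^ 2.
Proof.
  intros Hl. assert (Henergy := cleafh_energy l Hl).
  assert (H2n : 1 <= (r l ^ 2) ^ n) by (rewrite <- pow_mult; nra).
  destruct (Rlt_or_le (r l ^ 2) 1) as [Hlt|Hge]; [exfalso | exact Hge].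
  assert (H := pow_lt_1_compat (r l ^ 2) n (conj (pow2_ge_0 _) Hlt) Hn). lra.
Qed.

Lemma cleafh_ge_1 (l : R) : - eta n < l < eta n -> 1 <= r l.
Proof.
  intros Hl.
  assert (Hpos : 0 < r l).
  { apply (pos_of_continuous_nonzero r (- eta n) (eta n) 0); [| | lra | | exact Hl].
    - intros x Hx. apply derivable_continuous_pt. exists (Derive r x).
      apply is_derive_Reals, cleafh_is_derive, Hx.
    - intros x Hx Hrx. assert (H := cleafh_sq_ge_1 x Hx). rewrite Hrx in H. lra.
    - destruct Hr as [-> _]. lra. }
  assert (H := cleafh_sq_ge_1 l Hl). nra.
Qed.

End Cleafh.

Definition inv_sq (r : R -> R) (t : R) : R := / r t ^ 2.
Definition inv_sq' (r : R -> R) (t : R) : R := -2 * Derive r t / r t ^ 3.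

Section Cleafh3.

Variable r : R -> R.
Hypothesis Hr : is_cleafh 3 r.

Lemma cleafh3_inv_sq_bounds (t : R) : - eta 3 < t < eta 3 -> 0 < inv_sq r t <= 1.
Proof.
  intros Ht. assert (H := cleafh_sq_ge_1 3 r Hr ltac:(lia) t Ht). unfold inv_sq. split.
  - apply Rinv_0_lt_compat. lra.
  - rewrite <- Rinv_1. apply Rinv_le_contravar; lra.
Qed.

Lemma cleafh3_inv_sq_energy (t : R) : - eta 3 < t < eta 3 ->
  inv_sq' r t ^ 2 = 4 - 4 * inv_sq r t ^ 3.
Proof.
  intros Ht. assert (Hrt := cleafh_ge_1 3 r Hr ltac:(lia) t Ht).
  assert (Henergy := cleafh_energy 3 r Hr t Ht).
  change (2 * 3)%nat with 6%nat in Henergy.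
  unfold inv_sq', inv_sq.
  replace ((-2 * Derive r t / r t ^ 3) ^ 2) with (4 * Derive r t ^ 2 / r t ^ 6) by (field; lra).
  rewrite Henergy. field. lra.
Qed.

Lemma cleafh3_inv_sq_solves : solves_quadratic_ode (-6) (- eta 3) (eta 3) (inv_sq r) (inv_sq' r).
Proof.
  intros t Ht. assert (Hrt := cleafh_ge_1 3 r Hr ltac:(lia) t Ht).
  assert (Dr := cleafh_is_derive 3 r Hr t Ht).
  assert (DDr : is_derive (Derive r) t (3 * r t ^ 5)).
  { eapply is_derive_val; [apply (cleafh_is_derive2 3 r Hr t Ht) | simpl; ring]. }
  assert (Henergy := cleafh_energy 3 r Hr t Ht).
  change (2 * 3)%nat with 6%nat in Henergy.
  split.
  - eapply is_derive_val.
    + apply (is_derive_Rcomp (fun y => / y ^ 2) r); [|exact Dr].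
      auto_derive; [apply Rgt_not_eq; nra | reflexivity].
    + unfold inv_sq'. field. lra.
  - eapply is_derive_val.
    + apply (is_derive_Rmult (fun t => -2 * Derive r t) (fun t => / r t ^ 3)).
      * apply (is_derive_scal (Derive r) t (-2)), DDr.
      * apply (is_derive_Rcomp (fun y => / y ^ 3) r); [|exact Dr].
        auto_derive; [apply Rgt_not_eq; nra | reflexivity].
    + unfold inv_sq. transitivity (-6 * r t ^ 2 + 6 * Derive r t ^ 2 / r t ^ 4); [field; lra|].
      rewrite Henergy. field. lra.
Qed.

Lemma cleafh3_inv_sq_double (l : R) : - eta 3 < 2 * l < eta 3 ->
  inv_sq r (2 * l) = doubling (inv_sq r l).
Proof.
  intros Hl. destruct Hr as [Hr0 [Hr'0 _]].
  apply (quadratic_ode_unique (-24) 3 (- eta 3 / 2) (eta 3 / 2)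
    (fun t => inv_sq r (2 * t)) (fun t => 2 * inv_sq' r (2 * t))
    (fun t => doubling (inv_sq r t)) (fun t => doubling' (inv_sq r t) * inv_sq' r t));
    [lra | | | | | | lra].
  - replace (-24) with (2 ^ 2 * -6) by ring.
    apply solves_quadratic_ode_dilate; [lra|].
    apply (solves_quadratic_ode_sub _ (- eta 3) (eta 3)); [lra | lra | apply cleafh3_inv_sq_solves].
  - apply (solves_quadratic_ode_sub _ (- eta 3) (eta 3)); [lra | lra |].
    apply doubling_solves; [apply cleafh3_inv_sq_solves | apply cleafh3_inv_sq_energy |].
    intros t Ht. apply Rlt_not_eq, doubling_denominator_neg, cleafh3_inv_sq_bounds, Ht.
  - intros t Ht. split.
    + assert (H := cleafh3_inv_sq_bounds (2 * t) ltac:(lra)). rewrite Rabs_right; lra.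
    + apply doubling_abs_le, cleafh3_inv_sq_bounds. lra.
  - unfold inv_sq. rewrite Rmult_0_r, Hr0, pow1, Rinv_1, doubling_one. reflexivity.
  - unfold inv_sq'. rewrite Rmult_0_r, Hr'0. unfold Rdiv. ring.
Qed.

End Cleafh3.

Theorem mainTheorem11 (cleafh3 : R -> R) (Hc : is_cleafh 3 cleafh3) (l : R)
  (Hl : - eta 3 < 2 * l < eta 3) :
  let C := cleafh3 l in
  cleafh3 (2 * l) =
    (2 * C ^ 2 + 2 * C ^ 4 - 1) / sqrt (1 + 8 * C ^ 2 + 8 * C ^ 6 - 8 * C ^ 8).
Proof.
  intros C.
  assert (HC : 1 <= C) by (apply (cleafh_ge_1 3 cleafh3 Hc); [lia | lra]).
  assert (HN : 0 < 2 * C ^ 2 + 2 * C ^ 4 - 1) by nra.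
  assert (Hdouble := cleafh3_inv_sq_double cleafh3 Hc l Hl).
  unfold inv_sq in Hdouble. fold C in Hdouble. rewrite doubling_inv_sq in Hdouble by lra.
  apply eq_div_sqrt_of_inv_sq; [| exact HN | exact Hdouble].
  assert (H := cleafh_ge_1 3 cleafh3 Hc ltac:(lia) (2 * l) Hl). lra.
Qed.
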